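(* $\mathrm P\colon\mathcal X_n\to\mathcal P$ is a well-defined functor (in particular $\mathrm P(\mathbb X)$ is a Priestley space and $\mathrm P(\varphi)$ is a continuous order-preserving map for every object $\mathbb X$ and morphism $\varphi$ of $\mathcal X_n$). Moreover, for every $\mathbf A\in\mathcal V_n$, letting $\mathbf A^\flat=\langle A;\wedge,\vee,\mathbf f_0,\mathbf t_0\rangle$ be its bounded-distributive-lattice reduct, the Priestley space $\mathrm H(\mathbf A^\flat)$ is isomorphic to $\mathrm P(\mathrm D(\mathbf A))$.
   Context: Fix an integer $n\ge 1$; $[m,p]=\{i\in\mathbb Z:m\le i\le p\}$. Algebras have signature $(\otimes,\oplus,\wedge,\vee,\neg,\top,\mathbf f_0,\dots,\mathbf f_n,\mathbf t_0,\dots,\mathbf t_n,\bot)$. The algebra $\mathbf M_0$ has universe $\{\top^0,\mathbf f^0,\mathbf t^0,\bot^0\}$; its knowledge order has $\bot^0<\mathbf f^0<\top^0$, $\bot^0<\mathbf t^0<\top^0$ ($\mathbf f^0,\mathbf t^0$ incomparable) and its truth order has $\mathbf f^0<\top^0<\mathbf t^0$, $\mathbf f^0<\bot^0<\mathbf t^0$ ($\top^0,\bot^0$ incomparable); $\otimes,\oplus$ are meet and join in the knowledge order, $\wedge,\vee$ meet and join in the truth order; $\neg$ swaps $\mathbf f^0,\mathbf t^0$ and fixes $\top^0,\bot^0$; $\top,\bot$ denote $\top^0,\bot^0$, every $\mathbf f_i$ denotes $\mathbf f^0$ and every $\mathbf t_i$ denotes $\mathbf t^0$. For $k\in[1,n]$,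 $\mathbf M_k$ has universe $\{\top^k,\bot^k,\mathbf f^k,\mathbf t^k,\mathbf 0^k,\mathbf 1^k\}$, knowledge order generated by $\bot^k<\mathbf f^k<\mathbf 0^k<\top^k$ and $\bot^k<\mathbf t^k<\mathbf 1^k<\top^k$, truth order generated by $\mathbf 0^k<\mathbf f^k<\top^k<\mathbf t^k<\mathbf 1^k$ and $\mathbf f^k<\bot^k<\mathbf t^k$ ($\top^k,\bot^k$ incomparable), $\otimes,\oplus,\wedge,\vee$ as before, $\neg$ swapping $\mathbf f^k\leftrightarrow\mathbf t^k$, $\mathbf 0^k\leftrightarrow\mathbf 1^k$ and fixing $\top^k,\bot^k$; $\top,\bot$ denote $\top^k,\bot^k$, $\mathbf f_i$ denotes $\mathbf 0^k$ for $i<k$ and $\mathbf f^k$ for $i\ge k$, $\mathbf t_i$ denotes $\mathbf 1^k$ for $i<k$ and $\mathbf t^k$ for $i\ge k$. $\mathcal V_n$ is the class of algebras isomorphic to subalgebras of products of copies of $\mathbf M_0,\dots,\mathbf M_n$ (this is the variety generated by the default bilattice $\mathbf J_n$). Let $g_k\colon\mathbf M_k\to\mathbf M_0$ ($k\in[1,n]$) be the homomorphism $\top^k\mapsto\top^0$, $\bot^k\mapsto\bot^0$, $\mathbf f^k,\mathbf 0^k\mapsto\mathbf f^0$, $\mathbf t^k,\mathbf 1^k\mapsto\mathbf t^0$. Relations: $\leqslant^0$ is the knowledge order of $\mathbf M_0$; for $k\in[1,n]$, $\leqslant^k$ is the order on $M_k$ whose only strict comparabilities are $\mathbf f^k<\mathbf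 0^k$, $\mathbf t^k<\mathbf 1^k$; for $1\le j<k\le n$, ${\leqslant^{jk}}=\{(\top^j,\top^k),(\bot^j,\bot^k),(\mathbf f^j,\mathbf f^k),(\mathbf f^j,\mathbf 0^k),(\mathbf 0^j,\mathbf 0^k),(\mathbf t^j,\mathbf t^k),(\mathbf t^j,\mathbf 1^k),(\mathbf 1^j,\mathbf 1^k)\}$. $\underset{\sim}{\mathbf M}_n$ is the multi-sorted structure with sorts $M_0,\dots,M_n$, operations $g_k$, relations $\leqslant^k$, $\leqslant^{jk}$, discrete topologies. Multi-sorted topological structures $\mathbb X$ in this signature have disjoint topological sorts $X_0,\dots,X_n$ (disjoint-union topology on $X=X_0\cup\dots\cup X_n$), maps $g_k\colon X_k\to X_0$, relations $\leqslant^k\subseteq X_k^2$, $\leqslant^{jk}\subseteq X_j\times X_k$; morphisms are continuous sort-preserving maps preserving operations and relations. $\mathcal X_n$ is the category of structures isomorphic to topologically closed substructures of non-empty powers $\underset{\sim}{\mathbf M}_n^S$ (sortwise powers, pointwise structure, product topology), with these morphisms. For $\mathbf A\in\mathcal V_n$, $\mathrm D(\mathbf A)\in\mathcal X_n$ has sorts $X_k=\{\text{homomorphisms }\mathbf A\to\mathbf M_k\}$ with the topology inherited from $M_k^A$, $g_k(x)=g_k\circ x$, and relations defined pointwise ($x\leqslant^{jk}y$ iff $x(a)\leqslant^{jk}y(a)$ for all $a\in A$). For $\mathbb X\in\mathcal X_n$, let $X=X_0\cup\dots\cup X_n$, define $\le$ on $X$ by $x\le y$ iff either $x,y\in X_k$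 and $x\leqslant^k y$ for some $k\in[0,n]$, or $x\in X_j$, $y\in X_k$, $x\leqslant^{jk}y$ for some $1\le j<k\le n$, and let $g\colon X\to X$ be $g_k$ on $X_k$ ($k\ge1$) and the identity on $X_0$. Then $\mathrm P(\mathbb X)=\langle X\,\dot\cup\,\widehat X;\preccurlyeq,\mathscr T\rangle$ where $\widehat X=\{\widehat x\mid x\in X\}$ is a disjoint copy of $X$, $\mathscr T$ is the disjoint-union topology, and $\preccurlyeq$ is given by: (1) for $x,y\in X$: $x\preccurlyeq y$ iff $x\le y$; (2) $\widehat x\preccurlyeq\widehat y$ iff $x\ge y$; (3) for $x\in X\setminus X_0$, $y\in X_0$: $x\preccurlyeq y$ iff $g(x)\le y$; (4) for $x\in X\setminus X_0$, $\widehat y\in\widehat X_0$: $x\preccurlyeq\widehat y$ iff $g(x)\ge y$; (5) for $x\in X_0$, $\widehat y\in\widehat X\setminus\widehat X_0$: $x\preccurlyeq\widehat y$ iff $x\le g(y)$; (6) for $\widehat x\in\widehat X_0$, $\widehat y\in\widehat X\setminus\widehat X_0$: $\widehat x\preccurlyeq\widehat y$ iff $x\ge g(y)$; (7) for $x\in X\setminus X_0$, $\widehat y\in\widehat X\setminus\widehat X_0$: $x\preccurlyeq\widehat y$ iff $g(x)\le g(y)$ or $g(x)\ge g(y)$; no other pairs are related. For a morphism $\varphi$, $\mathrm P(\varphi)(x)=\varphi(x)$ and $\mathrm P(\varphi)(\widehat x)=\widehat{\varphi(x)}$. $\mathcal P$ is the category of Priestley spaces (compact, totally order-disconnected ordered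 topological spaces) with continuous order-preserving maps. For a bounded distributive lattice $\mathbf L$, $\mathrm H(\mathbf L)$ is the set of bounded lattice homomorphisms $\mathbf L\to\{0,1\}$ with the pointwise order and the topology inherited from $\{0,1\}^L$ (discrete $\{0,1\}$). Isomorphism of Priestley spaces means order-isomorphism that is a homeomorphism. *)

From mathcomp Require Import all_boot.
From Stdlib Require List.
Set Implicit Arguments.
Unset Strict Implicit.
Unset Printing Implicit Defensive.

Definition is_topology {T : Type} (opn : (T -> Prop) -> Prop) : Prop :=
  opn (fun _ => True) /\
  (forall F : (T -> Prop) -> Prop, (forall U, F U -> opn U) ->
      opn (fun x => exists U, F U /\ U x)) /\
  (forall U V, opn U -> opn V -> opn (fun x => U x /\ V x)).

Definition continuous {A B : Type} (oA : (A -> Prop) -> Prop)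
  (oB : (B -> Prop) -> Prop) (f : A -> B) : Prop :=
  forall V, oB V -> oA (fun x => V (f x)).

(** product topology on [S -> D] with [D] discrete *)
Definition prod_open (S D : Type) (U : (S -> D) -> Prop) : Prop :=
  forall x, U x -> exists l : list S,
    forall y, (forall s, List.In s l -> y s = x s) -> U y.

Definition sub_open {T : Type} (P : T -> Prop) (opn : (T -> Prop) -> Prop)
  (V : {x : T | P x} -> Prop) : Prop :=
  exists U, opn U /\ forall z, V z <-> U (proj1_sig z).

Arguments sub_open {T} P opn V.

Record OSpace := MkOSpace {
  os_car : Type;
  os_open : (os_car -> Prop) -> Prop;
  os_le : os_car -> os_car -> Prop }.
Arguments os_open : clear implicits.
Arguments os_le : clear implicits.

Definition os_compact (X : OSpace) : Prop :=
  forall F : (os_car X -> Prop) -> Prop,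
    (forall U, F U -> os_open X U) ->
    (forall x, exists U, F U /\ U x) ->
    exists l : list (os_car X -> Prop),
      (forall U, List.In U l -> F U) /\ (forall x, exists U, List.In U l /\ U x).

Definition os_partial_order (X : OSpace) : Prop :=
  (forall x, os_le X x x) /\
  (forall x y, os_le X x y -> os_le X y x -> x = y) /\
  (forall x y z, os_le X x y -> os_le X y z -> os_le X x z).

Definition os_clopen_up (X : OSpace) (U : os_car X -> Prop) : Prop :=
  os_open X U /\ os_open X (fun x => ~ U x) /\
  (forall x y, U x -> os_le X x y -> U y).

Arguments os_clopen_up : clear implicits.

Definition os_TOD (X : OSpace) : Prop :=
  forall x y, ~ os_le X x y -> exists U, os_clopen_up X U /\ U x /\ ~ U y.

Definition Priestley (X : OSpace) : Prop :=
  is_topology (os_open X) /\ os_partial_order X /\ os_compact X /\ os_TOD X.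

Definition os_continuous (X Y : OSpace) (f : os_car X -> os_car Y) : Prop :=
  continuous (os_open X) (os_open Y) f.

Definition os_monotone (X Y : OSpace) (f : os_car X -> os_car Y) : Prop :=
  forall x y, os_le X x y -> os_le Y (f x) (f y).

Definition os_iso (X Y : OSpace) : Prop :=
  exists (f : os_car X -> os_car Y) (g : os_car Y -> os_car X),
    cancel f g /\ cancel g f /\ os_continuous f /\ os_continuous g /\
    (forall x y, os_le X x y <-> os_le Y (f x) (f y)).

(** * The algebras M_0, M_k *)

Inductive M4 := Top4 | Bot4 | F4 | T4.
Inductive M6 := Top6 | Bot6 | F6 | T6 | Zero6 | One6.

(** knowledge / truth orders of M_0 *)
Definition kle4 (x y : M4) : bool :=
  match x, y with
  | Bot4, _ | _, Top4 | F4, F4 | T4, T4 => true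
  | _, _ => false end.
Definition tle4 (x y : M4) : bool :=
  match x, y with
  | F4, _ | _, T4 | Top4, Top4 | Bot4, Bot4 => true
  | _, _ => false end.

(** knowledge / truth orders of M_k, k >= 1 *)
Definition kle6 (x y : M6) : bool :=
  match x, y with
  | Bot6, _ | _, Top6 => true
  | F6, (F6 | Zero6) | Zero6, Zero6 => true
  | T6, (T6 | One6) | One6, One6 => true
  | _, _ => false end.
Definition tle6 (x y : M6) : bool :=
  match x, y with
  | Zero6, _ | _, One6 => true
  | F6, (F6 | Top6 | Bot6 | T6) => true
  | Top6, (Top6 | T6) | Bot6, (Bot6 | T6) | T6, T6 => true
  | _, _ => false end.

(** meet/join in these (lattice) orders: if the arguments are comparable
    take the smaller/larger one, otherwise the given default (which is the
    actual meet/join of incomparable pairs in each case). *)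
Definition mk_meet {T : Type} (le : T -> T -> bool) (d : T) (x y : T) : T :=
  if le x y then x else if le y x then y else d.
Definition mk_join {T : Type} (le : T -> T -> bool) (d : T) (x y : T) : T :=
  if le x y then y else if le y x then x else d.

Definition neg4 (x : M4) : M4 :=
  match x with F4 => T4 | T4 => F4 | y => y end.
Definition neg6 (x : M6) : M6 :=
  match x with F6 => T6 | T6 => F6 | Zero6 => One6 | One6 => Zero6 | y => y end.

Definition Mcar (m : nat) : Type := match m with 0 => M4 | S _ => M6 end.

Definition Mkmeet (m : nat) : Mcar m -> Mcar m -> Mcar m :=
  match m as m0 return Mcar m0 -> Mcar m0 -> Mcar m0 with
  | 0 => mk_meet kle4 Bot4 | S _ => mk_meet kle6 Bot6 end.
Definition Mkjoin (m : nat) : Mcar m -> Mcar m -> Mcar m :=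
  match m as m0 return Mcar m0 -> Mcar m0 -> Mcar m0 with
  | 0 => mk_join kle4 Top4 | S _ => mk_join kle6 Top6 end.
Definition Mtmeet (m : nat) : Mcar m -> Mcar m -> Mcar m :=
  match m as m0 return Mcar m0 -> Mcar m0 -> Mcar m0 with
  | 0 => mk_meet tle4 F4 | S _ => mk_meet tle6 F6 end.
Definition Mtjoin (m : nat) : Mcar m -> Mcar m -> Mcar m :=
  match m as m0 return Mcar m0 -> Mcar m0 -> Mcar m0 with
  | 0 => mk_join tle4 T4 | S _ => mk_join tle6 T6 end.
Definition Mneg (m : nat) : Mcar m -> Mcar m :=
  match m as m0 return Mcar m0 -> Mcar m0 with
  | 0 => neg4 | S _ => neg6 end.
Definition Mtop (m : nat) : Mcar m :=
  match m as m0 return Mcar m0 with 0 => Top4 | S _ => Top6 end.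
Definition Mbot (m : nat) : Mcar m :=
  match m as m0 return Mcar m0 with 0 => Bot4 | S _ => Bot6 end.
(** f_i denotes 0^k if i < k, f^k if i >= k (and f^0 in M_0) *)
Definition Mf (m : nat) (i : nat) : Mcar m :=
  match m as m0 return Mcar m0 with
  | 0 => F4 | S m' => if (i < m'.+1)%N then Zero6 else F6 end.
Definition Mt (m : nat) (i : nat) : Mcar m :=
  match m as m0 return Mcar m0 with
  | 0 => T4 | S m' => if (i < m'.+1)%N then One6 else T6 end.

(** the homomorphisms g_k : M_k -> M_0 (g_0 := identity, never used as an operation) *)
Definition g6 (x : M6) : M4 :=
  match x with
  | Top6 => Top4 | Bot6 => Bot4 | F6 | Zero6 => F4 | T6 | One6 => T4 end.
Definition gM (m : nat) : Mcar m -> Mcar 0 :=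
  match m as m0 return Mcar m0 -> M4 with 0 => fun x => x | S _ => g6 end.

(** the relations: <=^0 (knowledge order of M_0), <=^k, <=^{jk} *)
Definition lek6 (x y : M6) : bool :=
  match x, y with
  | Top6, Top6 | Bot6, Bot6 | F6, F6 | T6, T6 | Zero6, Zero6 | One6, One6 => true
  | F6, Zero6 | T6, One6 => true
  | _, _ => false end.
Definition lejk6 (x y : M6) : bool :=
  match x, y with
  | Top6, Top6 | Bot6, Bot6 | F6, F6 | F6, Zero6 | Zero6, Zero6
  | T6, T6 | T6, One6 | One6, One6 => true
  | _, _ => false end.
Definition Mle (m : nat) : Mcar m -> Mcar m -> bool :=
  match m as m0 return Mcar m0 -> Mcar m0 -> bool with
  | 0 => kle4 | S _ => lek6 end.
(** only used for 1 <= j < k *)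
Definition Mlejk (j k : nat) : Mcar j -> Mcar k -> bool :=
  match j as j0, k as k0 return Mcar j0 -> Mcar k0 -> bool with
  | S _, S _ => lejk6
  | _, _ => fun _ _ => false end.

(** * Algebras of the signature (⊗,⊕,∧,∨,¬,⊤,f_0..f_n,t_0..t_n,⊥) *)

Record Alg (n : nat) := MkAlg {
  acar : Type;
  a_kmeet : acar -> acar -> acar;
  a_kjoin : acar -> acar -> acar;
  a_meet : acar -> acar -> acar;
  a_join : acar -> acar -> acar;
  a_neg : acar -> acar;
  a_top : acar;
  a_f : 'I_n.+1 -> acar;
  a_t : 'I_n.+1 -> acar;
  a_bot : acar }.
Arguments acar {n}.
Arguments a_kmeet {n}. Arguments a_kjoin {n}. Arguments a_meet {n}.
Arguments a_join {n}. Arguments a_neg {n}. Arguments a_top {n}.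
Arguments a_f {n}. Arguments a_t {n}. Arguments a_bot {n}.

Definition is_hom (n : nat) (A B : Alg n) (h : acar A -> acar B) : Prop :=
  (forall x y, h (a_kmeet A x y) = a_kmeet B (h x) (h y)) /\
  (forall x y, h (a_kjoin A x y) = a_kjoin B (h x) (h y)) /\
  (forall x y, h (a_meet A x y) = a_meet B (h x) (h y)) /\
  (forall x y, h (a_join A x y) = a_join B (h x) (h y)) /\
  (forall x, h (a_neg A x) = a_neg B (h x)) /\
  h (a_top A) = a_top B /\
  (forall i, h (a_f A i) = a_f B i) /\
  (forall i, h (a_t A i) = a_t B i) /\
  h (a_bot A) = a_bot B.
Arguments is_hom {n} A B h.

Definition Malg (n : nat) (k : 'I_n.+1) : Alg n :=
  @MkAlg n (Mcar k) (@Mkmeet k) (@Mkjoin k) (@Mtmeet k) (@Mtjoin k) (@Mneg k)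
    (Mtop k) (fun i => Mf k i) (fun i => Mt k i) (Mbot k).

Definition Mprod (n : nat) (I : Type) (c : I -> 'I_n.+1) : Alg n :=
  @MkAlg n (forall i, Mcar (c i))
    (fun x y i => Mkmeet (x i) (y i))
    (fun x y i => Mkjoin (x i) (y i))
    (fun x y i => Mtmeet (x i) (y i))
    (fun x y i => Mtjoin (x i) (y i))
    (fun x i => Mneg (x i))
    (fun i => Mtop (c i))
    (fun j i => Mf (c i) j)
    (fun j i => Mt (c i) j)
    (fun i => Mbot (c i)).

(** A ∈ V_n : A is isomorphic to a subalgebra of a product of copies of
    M_0, ..., M_n, i.e. A embeds (injective homomorphism) into such a product. *)
Definition in_Vn (n : nat) (A : Alg n) : Prop :=
  exists (I : Type) (c : I -> 'I_n.+1) (h : acar A -> acar (Mprod c)),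
    is_hom A (Mprod c) h /\ injective h.

Lemma hom_comp (n : nat) (A B C : Alg n) (h : acar A -> acar B)
  (h' : acar B -> acar C) : is_hom A B h -> is_hom B C h' -> is_hom A C (h' \o h).
Proof.
move=> [H1 [H2 [H3 [H4 [H5 [H6 [H7 [H8 H9]]]]]]]]
       [K1 [K2 [K3 [K4 [K5 [K6 [K7 [K8 K9]]]]]]]] /=.
rewrite /comp; do ! split.
- by move=> x y; rewrite H1 K1.
- by move=> x y; rewrite H2 K2.
- by move=> x y; rewrite H3 K3.
- by move=> x y; rewrite H4 K4.
- by move=> x; rewrite H5 K5.
- by rewrite H6 K6.
- by move=> i; rewrite H7 K7.
- by move=> i; rewrite H8 K8.
- by rewrite H9 K9.
Qed.

Lemma gM_hom (n : nat) (k : 'I_n.+1) : is_hom (Malg k) (Malg ord0) (@gM k).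
Proof.
case: k => [[|m] Hm] /=; rewrite /is_hom /=.
- by do ! split.
- do ! split.
  + by case; case.
  + by case; case.
  + by case; case.
  + by case; case.
  + by case.
  + by move=> i; case: ifP.
  + by move=> i; case: ifP.
Qed.

(** * Multi-sorted topological structures (sorts X_0 .. X_n) *)

Record MStruct (n : nat) := MkMS {
  ms_sort : 'I_n.+1 -> Type;
  ms_open : forall k, (ms_sort k -> Prop) -> Prop;
  (** g_k : X_k -> X_0; only used for k in [1,n] *)
  ms_g : forall k, ms_sort k -> ms_sort ord0;
  ms_le : forall k, ms_sort k -> ms_sort k -> Prop;
  (** <=^{jk} ⊆ X_j × X_k; only used for 1 <= j < k <= n *)
  ms_lejk : forall j k, ms_sort j -> ms_sort k -> Prop }.
Arguments ms_sort {n}. Arguments ms_open {n}. Arguments ms_g {n}.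
Arguments ms_le {n}. Arguments ms_lejk {n}.

Definition is_morph (n : nat) (X Y : MStruct n)
  (phi : forall k, ms_sort X k -> ms_sort Y k) : Prop :=
  (forall k, continuous (ms_open X k) (ms_open Y k) (phi k)) /\
  (forall (k : 'I_n.+1) x, (0 < k)%N -> phi ord0 (ms_g X k x) = ms_g Y k (phi k x)) /\
  (forall k x y, ms_le X k x y -> ms_le Y k (phi k x) (phi k y)) /\
  (forall (j k : 'I_n.+1) x y, (0 < j)%N -> (j < k)%N -> ms_lejk X j k x y ->
       ms_lejk Y j k (phi j x) (phi k y)).

Definition ms_iso (n : nat) (X Y : MStruct n) : Prop :=
  exists (phi : forall k, ms_sort X k -> ms_sort Y k)
         (psi : forall k, ms_sort Y k -> ms_sort X k),
    is_morph phi /\ is_morph psi /\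
    (forall k x, psi k (phi k x) = x) /\ (forall k y, phi k (psi k y) = y).

Definition SubPow (n : nat) (S : Type) (Y : forall k : 'I_n.+1, (S -> Mcar k) -> Prop)
  (HY : forall (k : 'I_n.+1) x, Y k x -> Y ord0 (fun s => gM (x s))) : MStruct n :=
  @MkMS n (fun k => {x : S -> Mcar k | Y k x})
    (fun k => sub_open (Y k) (@prod_open S (Mcar k)))
    (fun k z => exist (Y ord0) (fun s => gM (proj1_sig z s)) (HY k _ (proj2_sig z)))
    (fun k x y => forall s, Mle (proj1_sig x s) (proj1_sig y s))
    (fun j k x y => forall s, Mlejk (proj1_sig x s) (proj1_sig y s)).

Definition in_Xn (n : nat) (X : MStruct n) : Prop :=
  exists (S : Type) (Y : forall k : 'I_n.+1, (S -> Mcar k) -> Prop)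
         (HY : forall (k : 'I_n.+1) x, Y k x -> Y ord0 (fun s => gM (x s))),
    inhabited S /\
    (forall k : 'I_n.+1, @prod_open S (Mcar k) (fun x => ~ Y k x)) /\
    ms_iso X (SubPow HY).

Definition D_of (n : nat) (A : Alg n) : MStruct n :=
  @MkMS n (fun k => {x : acar A -> Mcar k | is_hom A (Malg k) x})
    (fun k => sub_open (fun x => is_hom A (Malg k) x) (@prod_open (acar A) (Mcar k)))
    (fun k z => exist (fun x => is_hom A (Malg ord0) x) (@gM k \o proj1_sig z)
                      (hom_comp (proj2_sig z) (gM_hom k)))
    (fun k x y => forall a, Mle (proj1_sig x a) (proj1_sig y a))
    (fun j k x y => forall a, Mlejk (proj1_sig x a) (proj1_sig y a)).

(** * The functor P *)

Definition XU (n : nat) (X : MStruct n) : Type := {k : 'I_n.+1 & ms_sort X k}.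

Definition XU_open (n : nat) (X : MStruct n) (W : XU X -> Prop) : Prop :=
  forall k, ms_open X k (fun x => W (existT _ k x)).

Definition XU_le (n : nat) (X : MStruct n) (x y : XU X) : Prop :=
  match x, y with
  | existT j a, existT k b =>
      (exists e : j = k, ms_le X k (eq_rect j (ms_sort X) a k e) b) \/
      ((0 < j)%N /\ (j < k)%N /\ ms_lejk X j k a b)
  end.

Definition in0 (n : nat) (X : MStruct n) (x : XU X) : Prop := nat_of_ord (projT1 x) = 0.

Definition XU_g (n : nat) (X : MStruct n) (x : XU X) : XU X :=
  if nat_of_ord (projT1 x) == 0 then x
  else existT _ ord0 (ms_g X (projT1 x) (projT2 x)).

(** P(X) = X ∪ X^ ; inl x = x, inr x = x^ *)
Definition P_le (n : nat) (X : MStruct n) (u v : XU X + XU X) : Prop :=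
  match u, v with
  | inl x, inl y =>
      XU_le x y                                             (* (1) *)
      \/ (~ in0 x /\ in0 y /\ XU_le (XU_g x) y)             (* (3) *)
  | inr x, inr y =>
      XU_le y x                                             (* (2) *)
      \/ (in0 x /\ ~ in0 y /\ XU_le (XU_g y) x)             (* (6) *)
  | inl x, inr y =>
      (~ in0 x /\ in0 y /\ XU_le y (XU_g x))                (* (4) *)
      \/ (in0 x /\ ~ in0 y /\ XU_le x (XU_g y))             (* (5) *)
      \/ (~ in0 x /\ ~ in0 y /\
          (XU_le (XU_g x) (XU_g y) \/ XU_le (XU_g y) (XU_g x)))  (* (7) *)
  | inr _, inl _ => False
  end.

Definition P_of (n : nat) (X : MStruct n) : OSpace :=
  @MkOSpace (XU X + XU X)
    (fun V => XU_open (fun x => V (inl x)) /\ XU_open (fun x => V (inr x)))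
    (@P_le n X).

Definition XU_map (n : nat) (X Y : MStruct n)
  (phi : forall k, ms_sort X k -> ms_sort Y k) (x : XU X) : XU Y :=
  existT _ (projT1 x) (phi (projT1 x) (projT2 x)).

Definition P_map (n : nat) (X Y : MStruct n)
  (phi : forall k, ms_sort X k -> ms_sort Y k) (u : os_car (P_of X)) : os_car (P_of Y) :=
  match u with
  | inl x => inl (XU_map phi x)
  | inr x => inr (XU_map phi x)
  end.

(** * H(A^flat) for the reduct A^flat = <A; ∧, ∨, f_0, t_0> *)

Definition is_bl_hom (n : nat) (A : Alg n) (h : acar A -> bool) : Prop :=
  (forall a b, h (a_meet A a b) = h a && h b) /\
  (forall a b, h (a_join A a b) = h a || h b) /\
  h (a_f A ord0) = false /\ h (a_t A ord0) = true.

Definition H_flat (n : nat) (A : Alg n) : OSpace :=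
  @MkOSpace {h : acar A -> bool | is_bl_hom h}
    (sub_open (@is_bl_hom n A) (@prod_open (acar A) bool))
    (fun h h' => forall a, proj1_sig h a ==> proj1_sig h' a).

(* The order of P(X) is detected by finitely many term functions.  Encode every M_k in the
   six-element M6 (M_0 as the subset {⊤, ⊥, f, t}) and let a point x of sort k act through the
   prime filter of the truth lattice of M_k that belongs to its copy: ↑⊤ for x and ↑⊥ for x̂
   when k = 0, {1} for x and M_k \ {0} for x̂ when k >= 1.  An exhaustive check over M6 shows
   that fourteen unary and binary terms in ⊤, ⊥, f_0, t_0, ¬, ⊗, ⊕, together with a condition
   on sides and sorts, decide the relations (1)-(7) at single coordinates and, for rule (7),
   at pairs of coordinates.

   For a closed substructure X of a power M^S this makes ≼ the intersection of the relations
   read off at finitely many coordinates: it is a partial order, and the sets of points above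
   u at finitely many coordinates are clopen up-sets, which gives total order-disconnectedness.
   Compactness is Tychonoff's theorem for powers of finite discrete spaces.  Morphisms preserve
   the order, so everything transfers to the whole of X_n.

   For X = D(A) the same terms, now evaluated in A, show that u ≼ v iff χ_u <= χ_v, where χ_u
   is the lattice homomorphism A♭ -> 2 obtained from the point u and its prime filter.  The map
   χ is onto H(A♭) by the usual compactness argument, which uses that A embeds into a product
   of the M_k to separate a ≰ b by a point of D(A); its inverse is continuous because compact
   sets of P(D(A)) have closed images. *)

From mathcomp Require Import all_boot zify.
From mathcomp Require classical_sets.
From Stdlib Require Import Classical FunctionalExtensionality PropExtensionality.
From Stdlib Require Import ProofIrrelevance ClassicalEpsilon.
From Stdlib Require List.
Set Implicit Arguments.
Unset Strict Implicit.
Unset Printing Implicit Defensive.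

(** * The algebras M_k inside M6 *)

Definition emb4 (m : M4) : M6 :=
  match m with Top4 => Top6 | Bot4 => Bot6 | F4 => F6 | T4 => T6 end.

Definition emb (m : nat) : Mcar m -> M6 :=
  match m as m0 return Mcar m0 -> M6 with 0 => emb4 | S _ => id end.

Definition in_M0 (m : M6) : bool := if m is (Zero6 | One6) then false else true.
Definition in_sort (z : bool) (m : M6) : bool := z ==> in_M0 m.
Definition gM6 (m : M6) : M6 := match m with Zero6 => F6 | One6 => T6 | x => x end.
Definition Mle6 (z : bool) : M6 -> M6 -> bool := if z then kle6 else lek6.

Definition enumM (m : nat) : list (Mcar m) :=
  match m with
  | 0 => [:: Top4; Bot4; F4; T4]
  | S _ => [:: Top6; Bot6; F6; T6; Zero6; One6]
  end.

Lemma enumM_all m (x : Mcar m) : List.In x (enumM m).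
Proof. by case: m x => [|m] /=; case; tauto. Qed.

Lemma emb_inj m (u v : Mcar m) : emb u = emb v -> u = v.
Proof. by case: m u v => [|m] /=; [case; case|]. Qed.

Lemma emb_in_sort m (u : Mcar m) : in_sort (m == 0) (emb u).
Proof. by case: m u => [|m] //; case. Qed.

Lemma gM6_in_M0 m : in_M0 m -> gM6 m = m.
Proof. by case: m. Qed.

Lemma emb_gM m (u : Mcar m) : emb (gM u) = gM6 (emb u).
Proof. by case: m u => [|m]; case. Qed.

Lemma Mle_emb m (u v : Mcar m) : Mle u v = Mle6 (m == 0) (emb u) (emb v).
Proof. by case: m u v => [|m] /=; case; case. Qed.

Lemma Mlejk_emb j k (u : Mcar j) (v : Mcar k) : 0 < j -> 0 < k ->
  Mlejk u v = lek6 (emb u) (emb v).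
Proof. by case: j u => [|j] // u; case: k v => [|k] // v _ _; case: u; case: v. Qed.

Lemma emb_kmeet m (u v : Mcar m) : emb (Mkmeet u v) = mk_meet kle6 Bot6 (emb u) (emb v).
Proof. by case: m u v => [|m] /=; case; case. Qed.

Lemma emb_kjoin m (u v : Mcar m) : emb (Mkjoin u v) = mk_join kle6 Top6 (emb u) (emb v).
Proof. by case: m u v => [|m] /=; case; case. Qed.

Lemma emb_tmeet m (u v : Mcar m) : emb (Mtmeet u v) = mk_meet tle6 F6 (emb u) (emb v).
Proof. by case: m u v => [|m] /=; case; case. Qed.

Lemma emb_tjoin m (u v : Mcar m) : emb (Mtjoin u v) = mk_join tle6 T6 (emb u) (emb v).
Proof. by case: m u v => [|m] /=; case; case. Qed.

Lemma emb_neg m (u : Mcar m) : emb (Mneg u) = neg6 (emb u).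
Proof. by case: m u => [|m]; case. Qed.

Lemma emb_top m : emb (Mtop m) = Top6.
Proof. by case: m. Qed.

Lemma emb_bot m : emb (Mbot m) = Bot6.
Proof. by case: m. Qed.

Lemma emb_f m i : emb (Mf m i) = if i < m then Zero6 else F6.
Proof. by case: m => [|m] //=; case: ifP. Qed.

Lemma emb_t m i : emb (Mt m i) = if i < m then One6 else T6.
Proof. by case: m => [|m] //=; case: ifP. Qed.

(* [pfilter b z] is the prime filter of the truth lattice of M_k, z = (k == 0), through which
   a point of X (b = true) or of X^ (b = false) acts. *)
Definition pfilter (b z : bool) (m : M6) : bool :=
  match b, z, m with
  | true, true, (Top6 | T6 | One6) => true
  | false, true, (Bot6 | T6 | One6) => true
  | true, false, One6 => true
  | false, false, Zero6 => false
  | false, false, _ => true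
  | _, _, _ => false
  end.

Lemma pfilter_tmeet b z m1 m2 :
  pfilter b z (mk_meet tle6 F6 m1 m2) = pfilter b z m1 && pfilter b z m2.
Proof. by case: b z => [] []; case: m1; case: m2. Qed.

Lemma pfilter_tjoin b z m1 m2 :
  pfilter b z (mk_join tle6 T6 m1 m2) = pfilter b z m1 || pfilter b z m2.
Proof. by case: b z => [] []; case: m1; case: m2. Qed.

Lemma pfilter_separates z p q : in_sort z p -> in_sort z q -> mk_meet tle6 F6 p q <> p ->
  [|| pfilter true z p && ~~ pfilter true z q, pfilter false z p && ~~ pfilter false z q,
      pfilter true true (gM6 p) && ~~ pfilter true true (gM6 q) |
      pfilter false true (gM6 p) && ~~ pfilter false true (gM6 q)].
Proof. by case: z; case: p; case: q => //= _ _ []. Qed.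

(** * Term tests for the order of P *)

Inductive term :=
  | TVar of bool | TTop | TBot | TF0 | TT0
  | TNeg of term | TKMeet of term & term | TKJoin of term & term.

Fixpoint evalM (z : bool) (r : bool -> M6) (t : term) : M6 :=
  match t with
  | TVar i => r i
  | TTop => Top6
  | TBot => Bot6
  | TF0 => if z then F6 else Zero6
  | TT0 => if z then T6 else One6
  | TNeg t => neg6 (evalM z r t)
  | TKMeet t1 t2 => mk_meet kle6 Bot6 (evalM z r t1) (evalM z r t2)
  | TKJoin t1 t2 => mk_join kle6 Top6 (evalM z r t1) (evalM z r t2)
  end.

Definition pair2 (T : Type) (x y : T) (i : bool) : T := if i then x else y.

Lemma pair2_eta (T : Type) (r : bool -> T) : r = pair2 (r true) (r false).
Proof. by apply: functional_extensionality; case. Qed.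

Definition tbin (p q : term) : term := TKMeet (TKJoin p TF0) (TKJoin q TT0).

(* Found by exhaustive search over M6: the ten unary terms decide the rules (1)-(6), the four
   binary ones rule (7). *)
Definition tests : seq term :=
  let a := TVar true in let s := TVar false in
  [:: TTop; TBot; a; TNeg a; tbin a a; TNeg (tbin a a);
      TKMeet (TKMeet a (TNeg a)) TF0; TKMeet (TKMeet a (TNeg a)) TT0;
      TKJoin (TKJoin a (TNeg a)) TF0; TKJoin (TKJoin a (TNeg a)) TT0;
      tbin a s; tbin a (TNeg s); tbin (TNeg a) s; tbin (TNeg a) (TNeg s)].

Definition tests_le (b1 z1 b2 z2 : bool) (r1 r2 : bool -> M6) : bool :=
  all (fun t => pfilter b1 z1 (evalM z1 r1 t) ==> pfilter b2 z2 (evalM z2 r2 t)) tests.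

Lemma tests_le_refl b z r : tests_le b z b z r r.
Proof. by apply: allT => t; exact: implybb. Qed.

Lemma tests_le_trans b1 z1 b2 z2 b3 z3 r1 r2 r3 :
  tests_le b1 z1 b2 z2 r1 r2 -> tests_le b2 z2 b3 z3 r2 r3 -> tests_le b1 z1 b3 z3 r1 r3.
Proof.
move=> le12 le23; have := conj le12 le23 => /andP; rewrite -all_predI.
by apply: sub_all => t /andP[/implyP H12 /implyP H23]; apply/implyP => /H12.
Qed.

Lemma tests_le_var b1 z1 b2 z2 r1 r2 :
  tests_le b1 z1 b2 z2 r1 r2 -> pfilter b1 z1 (r1 true) -> pfilter b2 z2 (r2 true).
Proof. by case/and4P=> _ _ /implyP. Qed.

(* The sides and sorts that the rules (1)-(7) allow to be related; [j <= k] reflects that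
   <=^{jk} is only given for j < k. *)
Definition sort_le (b1 : bool) (j : nat) (b2 : bool) (k : nat) : bool :=
  match b1, b2 with
  | true, true => ((j != 0) || (k == 0)) && ((k == 0) || (j <= k))
  | false, false => ((k != 0) || (j == 0)) && ((j == 0) || (k <= j))
  | true, false => (j != 0) || (k != 0)
  | false, true => false
  end.

Lemma sort_le_refl b j : sort_le b j b j.
Proof. by case: b => /=; lia. Qed.

Lemma sort_le_trans b1 b2 b3 j k l :
  sort_le b1 j b2 k -> sort_le b2 k b3 l -> sort_le b1 j b3 l.
Proof. by case: b1 b2 b3 => [] [] [] //=; lia. Qed.

Lemma sort_le_antisym b1 b2 j k :
  sort_le b1 j b2 k -> sort_le b2 k b1 j -> b1 = b2 /\ j = k.
Proof. by case: b1 b2 => [] [] //=; lia. Qed.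

Lemma sort_le_of_pfilter b1 j b2 k :
  pfilter b1 (j == 0) Top6 ==> pfilter b2 (k == 0) Top6 ->
  pfilter b1 (j == 0) Bot6 ==> pfilter b2 (k == 0) Bot6 ->
  ([&& b1, b2, j != 0 & k != 0] -> j <= k) ->
  ([&& ~~ b1, ~~ b2, j != 0 & k != 0] -> k <= j) ->
  sort_le b1 j b2 k.
Proof. by case: b1 b2 => [] []; case: j => [|j]; case: k => [|k] //=; lia. Qed.

Definition rule7 (b1 z1 b2 z2 : bool) : bool := [&& b1, ~~ b2, ~~ z1 & ~~ z2].

(* The coordinatewise content of the rules (1)-(6); rule (7) asks for one of two
   coordinatewise comparisons to hold at all coordinates, see [coord_le]. *)
Definition coord_rel (b1 z1 b2 z2 : bool) (m1 m2 : M6) : bool :=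
  match b1, b2, z1, z2 with
  | true, true, true, true => kle6 m1 m2
  | true, true, false, true => kle6 (gM6 m1) m2
  | true, true, false, false => lek6 m1 m2
  | false, false, true, true => kle6 m2 m1
  | false, false, true, false => kle6 (gM6 m2) m1
  | false, false, false, false => lek6 m2 m1
  | true, false, true, false => kle6 m1 (gM6 m2)
  | true, false, false, true => kle6 m2 (gM6 m1)
  | true, false, false, false => true
  | _, _, _, _ => false
  end.

Lemma tests_le_of_coord_rel b1 z1 b2 z2 p1 p2 q1 q2 :
  in_sort z1 p1 -> in_sort z1 p2 -> in_sort z2 q1 -> in_sort z2 q2 -> ~~ rule7 b1 z1 b2 z2 ->
  coord_rel b1 z1 b2 z2 p1 q1 -> coord_rel b1 z1 b2 z2 p2 q2 ->
  tests_le b1 z1 b2 z2 (pair2 p1 p2) (pair2 q1 q2).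
Proof.
by case: b1 b2 z1 z2 => [] [] [] [] //; case: p1 => //; case: q1 => //;
  case: p2 => //; case: q2.
Qed.

Lemma tests_le_of_comparable p1 p2 q1 q2 :
  (kle6 (gM6 p1) (gM6 q1) && kle6 (gM6 p2) (gM6 q2)) ||
  (kle6 (gM6 q1) (gM6 p1) && kle6 (gM6 q2) (gM6 p2)) ->
  tests_le true false false false (pair2 p1 p2) (pair2 q1 q2).
Proof. by case: p1; case: q1; case: p2; case: q2. Qed.

Lemma coord_rel_of_tests_le b1 z1 b2 z2 p q : in_sort z1 p -> in_sort z2 q ->
  tests_le b1 z1 b2 z2 (pair2 p p) (pair2 q q) -> coord_rel b1 z1 b2 z2 p q.
Proof. by case: b1 b2 z1 z2 => [] [] [] []; case: p; case: q. Qed.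

Lemma comparable_of_tests_le p1 p2 q1 q2 :
  tests_le true false false false (pair2 p1 p2) (pair2 q1 q2) ->
  ~~ kle6 (gM6 p1) (gM6 q1) -> kle6 (gM6 q2) (gM6 p2).
Proof. by case: p1; case: q1; case: p2; case: q2. Qed.

Lemma tests_le_antisym b z p q : in_sort z p -> in_sort z q ->
  tests_le b z b z (pair2 p p) (pair2 q q) -> tests_le b z b z (pair2 q q) (pair2 p p) -> p = q.
Proof. by case: b z => [] []; case: p; case: q. Qed.

Definition coord_le (S : Type) (b1 : bool) (j : nat) (f : S -> M6)
    (b2 : bool) (k : nat) (h : S -> M6) : Prop :=
  sort_le b1 j b2 k /\
  if rule7 b1 (j == 0) b2 (k == 0) then
    (forall s, kle6 (gM6 (f s)) (gM6 (h s))) \/ (forall s, kle6 (gM6 (h s)) (gM6 (f s)))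
  else forall s, coord_rel b1 (j == 0) b2 (k == 0) (f s) (h s).

Lemma coord_le_tests (S : Type) b1 j (f : S -> M6) b2 k (h : S -> M6) :
  (forall s, in_sort (j == 0) (f s)) -> (forall s, in_sort (k == 0) (h s)) ->
  coord_le b1 j f b2 k h <->
  sort_le b1 j b2 k /\
  forall rho : bool -> S, tests_le b1 (j == 0) b2 (k == 0) (f \o rho) (h \o rho).
Proof.
move=> f_sort h_sort; rewrite /coord_le; split=> -[sorts H]; split=> //.
- move=> rho; rewrite (pair2_eta (f \o rho)) (pair2_eta (h \o rho)) /=.
  case: ifP H => [|not7 H]; last by apply: tests_le_of_coord_rel; rewrite ?not7.
  case/and4P=> -> /negbTE-> /negbTE-> /negbTE-> [] H; apply: tests_le_of_comparable.
  + by rewrite !H.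
  + by rewrite !H orbT.
- have tests_at s s' := H (pair2 s s').
  have {}tests_at s s' : tests_le b1 (j == 0) b2 (k == 0)
      (pair2 (f s) (f s')) (pair2 (h s) (h s')).
    by move: (tests_at s s'); rewrite (pair2_eta (f \o _)) (pair2_eta (h \o _)).
  case: ifP => [/and4P[b1T /negbTE b2F /negbTE jN /negbTE kN]|_]; last first.
    by move=> s; apply: coord_rel_of_tests_le.
  have [|/not_all_ex_not [a0 /negP not_le]] :=
    classic (forall s, kle6 (gM6 (f s)) (gM6 (h s))); first by left.
  right=> s; apply: (comparable_of_tests_le _ not_le).
  by move: (tests_at a0 s); rewrite b1T b2F jN kN.
Qed.

(** * Compactness *)

Definition compact_in (T : Type) (opn : (T -> Prop) -> Prop) (K : T -> Prop) : Prop :=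
  forall (I : Type) (G : I -> T -> Prop), (forall i, opn (G i)) ->
    (forall x, K x -> exists i, G i x) ->
    exists li : list I, forall x, K x -> exists i, List.In i li /\ G i x.

Section Tychonoff.
Variables (S M : Type) (eM : list M) (eM_all : forall m, List.In m eM).
Variables (I : Type) (G : I -> (S -> M) -> Prop).
Hypotheses (G_open : forall i, prod_open (G i)) (G_cover : forall x, exists i, G i x).

Definition cylinder (q : list (S * M)) (x : S -> M) : Prop :=
  forall s m, List.In (s, m) q -> x s = m.

Definition fin_covered (C : (S -> M) -> Prop) : Prop :=
  exists li : list I, forall x, C x -> exists i, List.In i li /\ G i x.

Definition uncovered (p : S * M -> Prop) : Prop :=
  forall q, (forall t, List.In t q -> p t) -> ~ fin_covered (cylinder q).

Lemma fin_covered_sub (C C' : (S -> M) -> Prop) :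
  (forall x, C x -> C' x) -> fin_covered C' -> fin_covered C.
Proof. by move=> CC' [li Hli]; exists li => x /CC'; exact: Hli. Qed.

Lemma chain_list_bound (F : (S * M -> Prop) -> Prop) q :
  (forall p p', F p -> F p' -> (forall t, p t -> p' t) \/ (forall t, p' t -> p t)) ->
  (forall t, List.In t q -> exists2 p, F p & p t) ->
  q = nil \/ exists2 p, F p & forall t, List.In t q -> p t.
Proof.
move=> F_total; elim: q => [|t q IH] Hq; first by left.
right; have [p Fp pt] := Hq t (or_introl erefl).
case: (IH (fun t' Ht' => Hq t' (or_intror Ht'))) => [->|[p' Fp' Hp']].
  by exists p => // t' [<-|].
case: (F_total p p' Fp Fp') => [pp'|p'p].
- by exists p' => // t' [<-|/Hp']; [exact: pp'|].
- by exists p => // t' [<-|/Hp'/p'p].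
Qed.

Lemma cylinder_drop p s m q :
  (forall t, List.In t q -> p t \/ t = (s, m)) ->
  exists2 q', (forall t, List.In t q' -> p t) &
    forall x, x s = m -> cylinder q' x -> cylinder q x.
Proof.
elim: q => [|t q IH] Hq; first by exists nil.
have [q' q'p q'q] := IH (fun t' Ht' => Hq t' (or_intror Ht')).
case: (Hq t (or_introl erefl)) => [pt|->].
- exists (t :: q') => [t' [<-|/q'p]|x xs Hx s' m' [Et|/(q'q x xs)]] //.
  + by apply: Hx; left.
  + by apply; move=> s'' m'' H''; apply: Hx; right.
- exists q' => // x xs Hx s' m' [[<- <-]|] //.
  exact: q'q.
Qed.

Lemma uncovered_extend p s : uncovered p -> exists m, uncovered (fun t => p t \/ t = (s, m)).
Proof.
move=> p_unc; apply: NNPP => no_extension.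
have covered_at m : exists2 q, (forall t, List.In t q -> p t) &
    fin_covered (fun x => x s = m /\ cylinder q x).
  apply: NNPP => not_covered; apply: no_extension; exists m => q' q'_p q'_covered.
  apply: not_covered; have [q q_p q_q'] := cylinder_drop q'_p.
  by exists q => //; apply: fin_covered_sub q'_covered => x [/q_q']; apply.
have covered_on ms : exists2 q, (forall t, List.In t q -> p t) &
    fin_covered (fun x => List.In (x s) ms /\ cylinder q x).
  elim: ms => [|m ms [q q_p [li Hli]]]; first by exists nil => //; exists nil => x [].
  have [qm qm_p [lim Hlim]] := covered_at m.
  exists (qm ++ q); first by move=> t /(List.in_app_or qm q t) [/qm_p|/q_p].
  exists (lim ++ li) => x [[xm|xms] Hx].
  - have [i [Hi Gi]] := Hlim x (conj (esym xm) (fun s' m' H => Hx s' m' (List.in_or_app _ _ _ (or_introl H)))).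
    by exists i; split=> //; apply: List.in_or_app; left.
  - have [i [Hi Gi]] := Hli x (conj xms (fun s' m' H => Hx s' m' (List.in_or_app _ _ _ (or_intror H)))).
    by exists i; split=> //; apply: List.in_or_app; right.
have [q q_p q_covered] := covered_on eM.
by apply: (p_unc q q_p); apply: fin_covered_sub q_covered => x Hx; split; [exact: eM_all|].
Qed.

(* A maximal uncovered relation (Zorn) is the graph of a point; an open set of the cover
   containing that point contains one of its cylinders. *)
Lemma pow_fin_covered : fin_covered (fun _ => True).
Proof.
apply: NNPP => not_covered.
have uncovered0 : uncovered (fun _ => False).
  by move=> q q0; apply: contra_not not_covered; apply: fin_covered_sub => x _ s m /q0.
have chain_uncovered (F : (S * M -> Prop) -> Prop) :
    (forall p, F p -> uncovered p) ->
    classical_sets.total_on F classical_sets.subset ->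
    uncovered (fun t => exists2 p, F p & p t).
  move=> F_unc F_total q Hq; case: (chain_list_bound F_total Hq) => [->|[p Fp Hp]].
  - exact: uncovered0.
  - exact: F_unc p Fp q Hp.
have [p [p_unc p_max]] := classical_sets.Zorn_bigcup chain_uncovered.
have p_total s : exists m, p (s, m).
  apply: NNPP => no_value; have [m pm_unc] := uncovered_extend s p_unc.
  apply: (p_max _ _ pm_unc); split=> [t|]; first by left.
  by move=> /(_ (s, m) (or_intror erefl)) psm; apply: no_value; exists m.
pose x s := proj1_sig (constructive_indefinite_description _ (p_total s)).
have p_x s : p (s, x s) by rewrite /x; case: constructive_indefinite_description.
have [i Gi] := G_cover x; have [l Hl] := G_open Gi.
apply: (p_unc [seq (s, x s) | s <- l]); first by move=> t /List.in_map_iff [s [<- _]].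
exists [:: i] => y Hy; exists i; split; first by left.
by apply: Hl => s Hs; apply: Hy; exact: List.in_map.
Qed.

End Tychonoff.

Lemma pow_compact (S M : Type) (eM : list M) :
  (forall m, List.In m eM) -> compact_in (@prod_open S M) (fun _ => True).
Proof.
move=> eM_all I G G_open G_cover.
have [li Hli] := pow_fin_covered eM_all G_open (fun x => G_cover x Logic.I).
by exists li => x _; exact: Hli.
Qed.

Lemma compact_ext (T : Type) opn (K K' : T -> Prop) :
  (forall x, K x <-> K' x) -> compact_in opn K -> compact_in opn K'.
Proof.
move=> KK' K_compact I G G_open G_cover.
have [li Hli] := K_compact I G G_open (fun x Kx => G_cover x (proj1 (KK' x) Kx)).
by exists li => x /KK' Kx; exact: Hli.
Qed.

Lemma compact_closed (T : Type) opn (K C : T -> Prop) :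
  compact_in opn K -> opn (fun x => ~ C x) -> compact_in opn (fun x => K x /\ C x).
Proof.
move=> K_compact C_closed I G G_open G_cover.
pose G' (o : option I) := if o is Some i then G i else fun x => ~ C x.
have [lo Hlo] : exists lo : list (option I), forall x, K x -> exists o, List.In o lo /\ G' o x.
  apply: (K_compact _ G'); first by case=> [i|] /=; [exact: G_open|].
  move=> x Kx; have [Cx|nCx] := classic (C x); last by exists None.
  by have [i Gi] := G_cover x (conj Kx Cx); exists (Some i).
exists (pmap id lo) => x [Kx Cx]; have [[i|] [Hi Gi]] := Hlo x Kx => //.
exists i; split=> //; elim: lo Hi {Hlo} => [|o lo IH] //= [->|/IH H] /=; first by left.
by case: o => [j|] //=; right.
Qed.

Lemma compact_sub (T : Type) opn (P : T -> Prop) :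
  compact_in opn P -> compact_in (sub_open P opn) (fun _ => True).
Proof.
move=> P_compact I G G_open G_cover.
pose J := {iU : I * (T -> Prop) | opn iU.2 /\ forall z, G iU.1 z <-> iU.2 (proj1_sig z)}.
have [lj Hlj] : exists lj : list J, forall x, P x -> exists j, List.In j lj /\ (proj1_sig j).2 x.
  apply: (P_compact _ (fun j : J => (proj1_sig j).2)) => [j|x Px].
    exact: (proj1 (proj2_sig j)).
  have [i Gi] := G_cover (exist P x Px) Logic.I.
  have [U [U_open GU]] := G_open i.
  by exists (exist _ (i, U) (conj U_open GU)); exact: (proj1 (GU _) Gi).
exists [seq (proj1_sig j).1 | j <- lj] => z _.
have [j [Hj Ujz]] := Hlj _ (proj2_sig z).
exists (proj1_sig j).1; split; last exact: (proj2 (proj2 (proj2_sig j) z) Ujz).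
exact: (List.in_map (fun j : J => (proj1_sig j).1)).
Qed.

Lemma compact_image (TA TB : Type) oA oB (f : TA -> TB) (K : TA -> Prop) :
  continuous oA oB f -> compact_in oA K -> compact_in oB (fun y => exists2 x, K x & f x = y).
Proof.
move=> f_cont K_compact I G G_open G_cover.
have [li Hli] := K_compact I (fun i x => G i (f x)) (fun i => f_cont _ (G_open i))
  (fun x Kx => G_cover _ (ex_intro2 _ _ x Kx erefl)).
by exists li => _ [x Kx <-]; exact: Hli.
Qed.

Lemma compact_fin_union (T : Type) opn (J : finType) (K : J -> T -> Prop) :
  (forall j, compact_in opn (K j)) -> compact_in opn (fun x => exists j, K j x).
Proof.
move=> K_compact I G G_open G_cover.
suff [li Hli] : exists li : list I, forall j, j \in enum J ->
    forall x, K j x -> exists i, List.In i li /\ G i x.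
  by exists li => x [j Kjx]; apply: (Hli j) => //; rewrite mem_enum.
elim: (enum J) => [|j js [li Hli]]; first by exists nil.
have [lj Hlj] := K_compact j I G G_open (fun x Kx => G_cover x (ex_intro _ j Kx)).
exists (lj ++ li) => j'; rewrite inE => /orP[/eqP-> x /Hlj|/Hli H x /H] [i [Hi Gi]].
- by exists i; split=> //; apply: List.in_or_app; left.
- by exists i; split=> //; apply: List.in_or_app; right.
Qed.

Lemma compact_os (X : OSpace) : compact_in (os_open X) (fun _ => True) -> os_compact X.
Proof.
move=> X_compact F F_open F_cover.
have [li Hli] := X_compact {U | F U} (@proj1_sig _ _) (fun U => F_open _ (proj2_sig U))
  (fun x _ => let: ex_intro U (conj FU Ux) := F_cover x in ex_intro _ (exist _ U FU) Ux).
exists [seq proj1_sig U | U <- li]; split.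
- by move=> _ /List.in_map_iff [U [<- _]]; exact: proj2_sig U.
- by move=> x; have [U [HU Ux]] := Hli x Logic.I; exists (proj1_sig U); split; [exact: List.in_map|].
Qed.

Lemma os_compact_in (X : OSpace) : os_compact X -> compact_in (os_open X) (fun _ => True).
Proof.
move=> X_compact I G G_open G_cover.
have F_open U : (exists i, U = G i) -> os_open X U by case=> i ->.
have F_cover x : exists U, (exists i, U = G i) /\ U x.
  by have [i Gi] := G_cover x Logic.I; exists (G i); split; first exists i.
have [l [lG l_cover]] := X_compact _ F_open F_cover.
have [li Hli] : exists li : list I, forall U, List.In U l -> exists2 i, List.In i li & U = G i.
  elim: l lG {l_cover} => [|U l IH] lG; first by exists nil.
  have [i ->] := lG U (or_introl erefl).
  have [li Hli] := IH (fun V HV => lG V (or_intror HV)).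
  by exists (i :: li) => V [<-|/Hli [j Hj ->]]; [exists i; first left|exists j; first right].
by exists li => x _; have [U [/Hli [i Hi ->] Gix]] := l_cover x; exists i.
Qed.

Lemma compact_separation (T A : Type) opn (K : T -> Prop) (f : T -> A -> bool) (h : A -> bool) :
  compact_in opn K -> (forall a, opn (fun x => f x a <> h a)) -> (forall x, K x -> f x <> h) ->
  exists la : list A, forall x, K x -> exists a, List.In a la /\ f x a <> h a.
Proof.
move=> K_compact f_cont f_ne; apply: (K_compact A (fun a x => f x a <> h a) f_cont) => x Kx.
apply: NNPP => agree; apply: (f_ne x Kx); apply: functional_extensionality => a.
by apply: NNPP => ne; apply: agree; exists a.
Qed.

(** * Product and subspace topologies *)

Lemma pred_ext (T : Type) (U V : T -> Prop) : (forall x, U x <-> V x) -> U = V.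
Proof. by move=> UV; apply: functional_extensionality => x; apply: propositional_extensionality. Qed.

Lemma prod_open_topology (S D : Type) : is_topology (@prod_open S D).
Proof.
split; [|split].
- by move=> x _; exists nil.
- move=> F F_open x [U [FU Ux]]; have [l Hl] := F_open U FU x Ux.
  by exists l => y /Hl Uy; exists U.
- move=> U V U_open V_open x [Ux Vx].
  have [l Hl] := U_open x Ux; have [l' Hl'] := V_open x Vx.
  exists (l ++ l') => y Hy; split; [apply: Hl | apply: Hl'] => s Hs; apply: Hy;
    apply: List.in_or_app; by [left|right].
Qed.

Lemma sub_open_topology (T : Type) (P : T -> Prop) opn :
  is_topology opn -> is_topology (sub_open P opn).
Proof.
move=> [opnT [opnU opnI]]; split; [|split].
- by exists (fun _ => True).
- move=> F F_open.
  exists (fun x => exists U, (exists2 V, F V & opn U /\ forall z, V z <-> U (proj1_sig z)) /\ U x).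
  split; first by apply: opnU => U [V _ []].
  move=> z; split=> [[V [FV Vz]]|[U [[V FV [_ VU]] Uz]]]; last by exists V; split; last exact/VU.
  have [U [U_open VU]] := F_open V FV.
  by exists U; split; [exists V|apply/VU].
- move=> V W [U [U_open VU]] [U' [U'_open WU']].
  exists (fun x => U x /\ U' x); split; first exact: opnI.
  by move=> z; rewrite VU WU'.
Qed.

Lemma sub_open_local (S D : Type) (P : (S -> D) -> Prop) (l : list S) (V : {x | P x} -> Prop) :
  (forall z z', (forall s, List.In s l -> proj1_sig z s = proj1_sig z' s) -> V z -> V z') ->
  sub_open P (@prod_open S D) V.
Proof.
move=> V_local; exists (fun x => exists z, V z /\ forall s, List.In s l -> x s = proj1_sig z s).
split=> [x [z [Vz xz]]|z]; first by exists l => y yx; exists z; split=> // s Hs; rewrite yx ?xz.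
split=> [Vz|[z' [Vz' zz']]]; first by exists z.
by apply: V_local Vz' => s /zz'.
Qed.

Section ProdClosed.
Variables (S D : Type).

Lemma prod_closed_local (l : list S) (Q : (S -> D) -> Prop) :
  (forall x y, (forall s, List.In s l -> x s = y s) -> Q x -> Q y) ->
  prod_open (fun x => ~ Q x).
Proof. by move=> Q_local x Qx; exists l => y xy /(Q_local y x) Qy; apply: Qx; apply: Qy => s /xy. Qed.

Lemma prod_closed_forall (J : Type) (Q : J -> (S -> D) -> Prop) :
  (forall j, prod_open (fun x => ~ Q j x)) -> prod_open (fun x => ~ forall j, Q j x).
Proof.
move=> Q_closed x /not_all_ex_not [j Qjx]; have [l Hl] := Q_closed j x Qjx.
by exists l => y /Hl Qjy Qy; apply: Qjy.
Qed.

Lemma prod_closed_and (Q R : (S -> D) -> Prop) :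
  prod_open (fun x => ~ Q x) -> prod_open (fun x => ~ R x) -> prod_open (fun x => ~ (Q x /\ R x)).
Proof.
move=> Q_closed R_closed x /not_and_or [/Q_closed [l Hl]|/R_closed [l Hl]];
  by exists l => y /Hl H [].
Qed.

Lemma prod_closed_eq2 (c a b : S) (F : D -> D -> D) :
  prod_open (fun x : S -> D => ~ x c = F (x a) (x b)).
Proof. by apply: (@prod_closed_local [:: c; a; b]) => x y xy; rewrite -!xy /=; tauto. Qed.

Lemma prod_closed_eq1 (c a : S) (F : D -> D) : prod_open (fun x : S -> D => ~ x c = F (x a)).
Proof. by apply: (@prod_closed_local [:: c; a]) => x y xy; rewrite -!xy /=; tauto. Qed.

Lemma prod_closed_eq0 (c : S) (d : D) : prod_open (fun x : S -> D => ~ x c = d).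
Proof. by apply: (@prod_closed_local [:: c]) => x y xy; rewrite -xy /=; tauto. Qed.

End ProdClosed.

Section PriestleyTransfer.
Variables (A B : OSpace) (f : os_car A -> os_car B) (g : os_car B -> os_car A).
Hypotheses (fK : cancel f g) (gK : cancel g f).
Hypotheses (f_cont : os_continuous f) (g_cont : os_continuous g).
Hypotheses (f_mono : os_monotone f) (g_mono : os_monotone g).

Lemma open_transfer (U : os_car A -> Prop) : os_open A U <-> os_open B (fun b => U (g b)).
Proof.
split; first exact: g_cont.
by move/f_cont; rewrite (pred_ext (U := fun a => U (g (f a))) (V := U)) // => a; rewrite fK.
Qed.

Lemma le_transfer x y : os_le A x y <-> os_le B (f x) (f y).
Proof. by split=> [/f_mono|/g_mono]; rewrite ?fK. Qed.

Lemma priestley_transfer : Priestley B -> Priestley A.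
Proof.
move=> [[openT [openU openI]] [[le_refl [le_anti le_trans]] [B_compact B_TOD]]].
have family_transfer (F : (os_car A -> Prop) -> Prop) :
    (fun b => exists V, F (fun a => V (f a)) /\ V b) = (fun b => exists U, F U /\ U (g b)).
  apply: pred_ext => b; split=> [[V [FV Vb]]|[U [FU Ub]]].
  - by exists (fun a => V (f a)); rewrite gK.
  - exists (fun a => U (g a)); split=> //.
    by rewrite (pred_ext (U := fun a => U (g (f a))) (V := U)) // => a; rewrite fK.
have open_family (F : (os_car A -> Prop) -> Prop) :
    (forall U, F U -> os_open A U) -> forall V, F (fun a => V (f a)) -> os_open B V.
  move=> F_open V /F_open /open_transfer.
  by rewrite (pred_ext (U := fun b => V (f (g b))) (V := V)) // => b; rewrite gK.
split; [split; [|split]|split; [split; [|split]|split]].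
- exact: f_cont openT.
- move=> F F_open; apply/open_transfer; rewrite -family_transfer.
  exact: openU (open_family F F_open).
- by move=> U V /open_transfer U_open /open_transfer V_open; apply/open_transfer; exact: openI.
- by move=> x; apply/le_transfer; exact: le_refl.
- by move=> x y /le_transfer xy /le_transfer yx; apply: (can_inj fK); exact: le_anti.
- by move=> x y z /le_transfer xy /le_transfer yz; apply/le_transfer; exact: le_trans yz.
- apply: compact_os => I G G_open G_cover.
  have [li Hli] := compact_image g_cont (os_compact_in B_compact) G_open
    (fun x _ => G_cover x Logic.I).
  by exists li => x _; apply: Hli; exists (f x); rewrite ?fK.
- move=> x y /le_transfer /B_TOD [U [[U_open [U_coopen U_up]] [Ux Uy]]].
  exists (fun a => U (f a)); split=> //; split; first exact: f_cont U_open.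
  split; first exact: f_cont _ U_coopen.
  by move=> a a' Ua /f_mono; exact: U_up.
Qed.

End PriestleyTransfer.

(** * The ordered space P(X) *)

Section POpen.
Variables (n : nat) (X : MStruct n).

Lemma XU_open_union (e : XU X -> os_car (P_of X)) (F : (os_car (P_of X) -> Prop) -> Prop) :
  (forall k, is_topology (ms_open X k)) ->
  (forall U, F U -> XU_open (fun x => U (e x))) -> XU_open (fun x => exists U, F U /\ U (e x)).
Proof.
move=> X_top F_open k.
have -> : (fun z => exists U, F U /\ U (e (existT _ k z))) =
          (fun z => exists W, (exists2 U, F U & W = fun z => U (e (existT _ k z))) /\ W z).
  apply: pred_ext => z; split=> [[U [FU Uz]]|[_ [[U FU ->] Uz]]]; last by exists U.
  by exists (fun z => U (e (existT _ k z))); split=> //; exists U.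
by apply: (X_top k).2.1 => _ [U FU ->]; exact: F_open.
Qed.

Lemma P_topology : (forall k, is_topology (ms_open X k)) -> is_topology (os_open (P_of X)).
Proof.
move=> X_top; split; [|split].
- by split=> k; exact: (X_top k).1.
- by move=> F F_open; split; apply: XU_open_union => // U /F_open [].
- by move=> U V [U1 U2] [V1 V2]; split=> k; apply: (X_top k).2.2; [exact: U1|exact: V1|exact: U2|exact: V2].
Qed.

End POpen.

Section SubPowP.
Local Unset Implicit Arguments.
Variables (n : nat) (S : Type) (Y : forall k : 'I_n.+1, (S -> Mcar k) -> Prop).
Variable (HY : forall (k : 'I_n.+1) x, Y k x -> Y ord0 (fun s => gM (x s))).
Local Set Implicit Arguments.
Local Notation X := (SubPow HY).

Definition srt (x : XU X) : nat := projT1 x.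
Definition val6 (x : XU X) (s : S) : M6 := emb (proj1_sig (projT2 x) s).
Definition pbase (u : XU X + XU X) : XU X := match u with inl x | inr x => x end.
Definition pside (u : XU X + XU X) : bool := if u is inl _ then true else false.
Definition pinj (b : bool) : XU X -> XU X + XU X := if b then inl else inr.

Lemma val6_in_sort x s : in_sort (srt x == 0) (val6 x s).
Proof. exact: emb_in_sort. Qed.

Lemma XU_g_srt x : srt (XU_g x) = 0.
Proof. by rewrite /XU_g; case: eqP. Qed.

Lemma XU_g_val6 x : val6 (XU_g x) = fun s => gM6 (val6 x s).
Proof.
apply: functional_extensionality => s; rewrite /XU_g; case: eqP => [x0|_].
- by rewrite gM6_in_M0 //; move: (val6_in_sort x s); rewrite /srt x0.
- exact: emb_gM.
Qed.

Lemma XU_leE x y : XU_le x y <->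
  (srt x = srt y \/ 0 < srt x < srt y) /\ forall s, Mle6 (srt x == 0) (val6 x s) (val6 y s).
Proof.
case: x y => j [a Ya] [k [b Yb]]; rewrite /XU_le /srt /val6 /=; split.
- case=> [[e le_ab]|[j0 [jk le_ab]]].
  + by case: k / e {Yb} b le_ab => b le_ab; split=> [|s]; [left|rewrite -Mle_emb].
  + have k0 : 0 < k := leq_trans j0 (ltnW jk).
    split=> [|s]; first by right; apply/andP.
    by rewrite eqn0Ngt j0 /= -Mlejk_emb // le_ab.
- case=> [[/val_inj e|/andP[j0 jk]] le_ab].
  + by left; case: k / e b Yb le_ab => b _ le_ab; exists erefl => s; rewrite Mle_emb.
  + have k0 : 0 < k := leq_trans j0 (ltnW jk).
    right; do 2 split=> //; move=> s; rewrite Mlejk_emb //.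
    by move: (le_ab s); rewrite eqn0Ngt j0.
Qed.

Lemma P_le_coord (u v : os_car (P_of X)) : P_le u v <->
  coord_le (pside u) (srt (pbase u)) (val6 (pbase u)) (pside v) (srt (pbase v)) (val6 (pbase v)).
Proof.
case: u v => x [] y; rewrite /P_le /in0 -/(srt x) -/(srt y) /= ?XU_leE ?XU_g_srt ?XU_g_val6;
  move: (srt x) (srt y) (val6 x) (val6 y) => [|j] [|k] f h; rewrite /coord_le /=.
all: by intuition lia.
Qed.

Definition P_le_at (R : (bool -> S) -> Prop) (u v : XU X + XU X) : Prop :=
  sort_le (pside u) (srt (pbase u)) (pside v) (srt (pbase v)) /\
  forall rho, R rho -> tests_le (pside u) (srt (pbase u) == 0) (pside v) (srt (pbase v) == 0)
                         (val6 (pbase u) \o rho) (val6 (pbase v) \o rho).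

Lemma P_le_tests u v : P_le u v <-> P_le_at (fun _ => True) u v.
Proof.
rewrite P_le_coord coord_le_tests; try by move=> s; exact: val6_in_sort.
by split=> -[sorts uv]; split=> // rho; exact: uv.
Qed.

Lemma P_le_at_refl R u : P_le_at R u u.
Proof. by split=> [|rho _]; [exact: sort_le_refl|exact: tests_le_refl]. Qed.

Lemma P_le_at_trans R u v w : P_le_at R u v -> P_le_at R v w -> P_le_at R u w.
Proof.
move=> [uv_sort uv_tests] [vw_sort vw_tests].
split=> [|rho Rrho]; first exact: sort_le_trans vw_sort.
exact: tests_le_trans (uv_tests rho Rrho) (vw_tests rho Rrho).
Qed.

Lemma P_le_at_of_le R u v : P_le u v -> P_le_at R u v.
Proof. by move=> /P_le_tests [uv_sort uv_tests]; split=> // rho _; exact: uv_tests. Qed.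

Lemma P_le_at_witness u v : ~ P_le u v -> exists l, ~ P_le_at (fun rho => List.In rho l) u v.
Proof.
rewrite P_le_tests => /not_and_or [no_sort|/not_all_ex_not [rho no_tests]].
- by exists nil => -[].
- by exists [:: rho] => -[_ /(_ rho (or_introl erefl))]; apply: contra_not no_tests.
Qed.

Lemma point_eq u v : pside u = pside v -> srt (pbase u) = srt (pbase v) ->
  val6 (pbase u) = val6 (pbase v) -> u = v.
Proof.
have base_eq (x y : XU X) : srt x = srt y -> val6 x = val6 y -> x = y.
  case: x y => j [a Ya] [k [b Yb]]; rewrite /srt /val6 /= => /val_inj jk; subst k.
  move=> ab; have {}ab : a = b.
    by apply: functional_extensionality => s; apply: emb_inj; exact: (congr1 (@^~ s) ab).
  by subst b; rewrite (proof_irrelevance _ Ya Yb).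
by case: u v => x [] y //= _ xy_srt xy_val; rewrite (base_eq x y).
Qed.

Lemma P_le_refl (u : XU X + XU X) : P_le u u.
Proof. exact/P_le_tests/P_le_at_refl. Qed.

Lemma P_le_trans (u v w : XU X + XU X) : P_le u v -> P_le v w -> P_le u w.
Proof. by move=> /P_le_tests uv /P_le_tests vw; apply/P_le_tests; exact: P_le_at_trans vw. Qed.

Lemma P_le_antisym (u v : XU X + XU X) : P_le u v -> P_le v u -> u = v.
Proof.
move=> /P_le_tests [uv_sort uv_tests] /P_le_tests [vu_sort vu_tests].
have [side_eq srt_eq] := sort_le_antisym uv_sort vu_sort.
apply: point_eq => //; apply: functional_extensionality => s.
move: (uv_tests (fun _ => s) Logic.I) (vu_tests (fun _ => s) Logic.I).
rewrite side_eq srt_eq (pair2_eta (val6 (pbase u) \o _)) (pair2_eta (val6 (pbase v) \o _)) /=.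
by apply: tests_le_antisym; [rewrite -srt_eq|]; exact: val6_in_sort.
Qed.

Lemma P_open_local (l : list S) (U : XU X + XU X -> Prop) :
  (forall b k (z z' : {x | Y k x}), (forall s, List.In s l -> proj1_sig z s = proj1_sig z' s) ->
     U (pinj b (existT _ k z)) -> U (pinj b (existT _ k z'))) ->
  os_open (P_of X) U.
Proof.
move=> U_local; split=> k; apply: (@sub_open_local _ _ _ l) => z z'.
- exact: (U_local true).
- exact: (U_local false).
Qed.

Lemma P_le_at_clopen l u :
  os_open (P_of X) (P_le_at (fun rho => List.In rho l) u) /\
  os_open (P_of X) (fun w => ~ P_le_at (fun rho => List.In rho l) u w).
Proof.
pose l' := List.flat_map (fun rho : bool -> S => [:: rho true; rho false]) l.
have local b k (z z' : {x | Y k x}) : (forall s, List.In s l' -> proj1_sig z s = proj1_sig z' s) ->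
    P_le_at (fun rho => List.In rho l) u (pinj b (existT _ k z)) <->
    P_le_at (fun rho => List.In rho l) u (pinj b (existT _ k z')).
  move=> zz'.
  have same_val rho : List.In rho l -> val6 (existT _ k z) \o rho = val6 (existT _ k z') \o rho.
    move=> Rrho; apply: functional_extensionality => i; rewrite /val6 /= zz' //.
    by apply/List.in_flat_map; exists rho; split=> //; case: i; [left|right; left].
  case: b; split=> -[sorts H]; split=> // rho Rrho; have := H rho Rrho;
    by rewrite /= (same_val rho Rrho).
split; apply: (@P_open_local l') => b k z z' /(local b) E.
- by move/E.
- by move=> not_le /E.
Qed.

Hypothesis Y_closed : forall k, prod_open (fun x => ~ Y k x).

Lemma SubPow_P_compact : compact_in (os_open (P_of X)) (fun _ => True).
Proof.
pose K (j : bool * 'I_n.+1) u := exists2 z : {x | Y j.2 x}, True & pinj j.1 (existT _ j.2 z) = u.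
have K_compact j : compact_in (os_open (P_of X)) (K j).
  apply: (@compact_image _ _ (sub_open (Y j.2) (@prod_open S _))).
  - by case: j => [[] k] V [V1 V2]; [exact: V1 k | exact: V2 k].
  - apply: compact_sub; apply: (@compact_ext _ _ (fun x => True /\ Y j.2 x)) => [x|].
      by split=> [[]|].
    exact: compact_closed (@pow_compact S _ _ (@enumM_all j.2)) (@Y_closed j.2).
apply: compact_ext (compact_fin_union K_compact) => -[] [k z]; split=> // _.
- by exists (true, k); exists z.
- by exists (false, k); exists z.
Qed.

Lemma SubPow_priestley : Priestley (P_of X).
Proof.
split; [|split; [|split]].
- apply: P_topology => k; exact: sub_open_topology (prod_open_topology _ _).
- split; [exact: P_le_refl | split; [exact: P_le_antisym | exact: P_le_trans]].
- exact: compact_os SubPow_P_compact.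
- move=> u v /P_le_at_witness [l not_le]; exists (P_le_at (fun rho => List.In rho l) u).
  have [U_open U_coopen] := P_le_at_clopen l u.
  split; last by split=> //; exact: P_le_at_refl.
  do 2 split=> //; move=> w w' uw /(P_le_at_of_le (fun rho => List.In rho l)).
  exact: P_le_at_trans uw.
Qed.

End SubPowP.

(** * The functor P *)

Section PMap.
Variables (n : nat) (X Y : MStruct n) (phi : forall k, ms_sort X k -> ms_sort Y k).
Hypothesis phi_morph : is_morph phi.

Lemma P_map_cont : os_continuous (P_map phi).
Proof.
case: phi_morph => phi_cont _ V [V1 V2].
by split=> k; [exact: phi_cont _ (V1 k) | exact: phi_cont _ (V2 k)].
Qed.

Lemma XU_le_map x y : XU_le x y -> XU_le (XU_map phi x) (XU_map phi y).
Proof.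
case: phi_morph => _ [_ [phi_le phi_lejk]].
case: x y => j a [k b] [[e ab]|[j0 [jk ab]]]; last by right; do 2 split=> //; exact: phi_lejk.
by left; case: k / e b ab => b ab; exists erefl; exact: phi_le.
Qed.

Lemma XU_g_map x : ~ in0 x -> XU_g (XU_map phi x) = XU_map phi (XU_g x).
Proof.
case: phi_morph => _ [phi_g _]; case: x => k a; rewrite /in0 /XU_g /= => /eqP/negbTE k0.
by rewrite k0 /XU_map /= phi_g // lt0n k0.
Qed.

Lemma P_map_mono : os_monotone (P_map phi).
Proof.
have g_map x y : ~ in0 x -> XU_le (XU_g x) y -> XU_le (XU_g (XU_map phi x)) (XU_map phi y).
  by move=> x0 /XU_le_map; rewrite XU_g_map.
have map_g x y : ~ in0 y -> XU_le x (XU_g y) -> XU_le (XU_map phi x) (XU_g (XU_map phi y)).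
  by move=> y0 /XU_le_map; rewrite XU_g_map.
case=> x [] y /=.
- case=> [xy|[x0 [y0 gxy]]]; first by left; exact: XU_le_map.
  by right; do 2 split=> //; exact: g_map.
- case=> [[x0 [y0 ygx]]|[[x0 [y0 xgy]]|[x0 [y0 [gxy|gyx]]]]].
  + by left; do 2 split=> //; exact: map_g.
  + by right; left; do 2 split=> //; exact: map_g.
  + by right; right; do 2 split=> //; left; rewrite !XU_g_map //; exact: XU_le_map.
  + by right; right; do 2 split=> //; right; rewrite !XU_g_map //; exact: XU_le_map.
- by [].
- case=> [yx|[x0 [y0 gyx]]]; first by left; exact: XU_le_map.
  by right; do 2 split=> //; exact: g_map.
Qed.

End PMap.

Lemma P_map_id n (X : MStruct n) (u : os_car (P_of X)) :
  P_map (fun k (x : ms_sort X k) => x) u = u.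
Proof. by case: u => [[k z]|[k z]]. Qed.

Lemma P_map_comp n (X Y Z : MStruct n) (phi : forall k, ms_sort X k -> ms_sort Y k)
  (psi : forall k, ms_sort Y k -> ms_sort Z k) (u : os_car (P_of X)) :
  P_map (fun k x => psi k (phi k x)) u = P_map psi (P_map phi u).
Proof. by case: u => [[k z]|[k z]]. Qed.

Lemma Xn_priestley n (X : MStruct n) : in_Xn X -> Priestley (P_of X).
Proof.
case=> S [Y [HY [_ [Y_closed [phi [psi [phi_morph [psi_morph [phiK psiK]]]]]]]]].
apply: (@priestley_transfer _ _ (P_map phi) (P_map psi)).
- by case=> [[k z]|[k z]]; rewrite /= /XU_map /= phiK.
- by case=> [[k z]|[k z]]; rewrite /= /XU_map /= psiK.
- exact: P_map_cont.
- exact: P_map_cont.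
- exact: P_map_mono.
- exact: P_map_mono.
- exact: SubPow_priestley.
Qed.

(** * The Priestley space of the lattice reduct of A *)

Section Dual.
Variables (n : nat) (A : Alg n).

Fixpoint evalA (r : bool -> acar A) (t : term) : acar A :=
  match t with
  | TVar i => r i
  | TTop => a_top A
  | TBot => a_bot A
  | TF0 => a_f A ord0
  | TT0 => a_t A ord0
  | TNeg t => a_neg A (evalA r t)
  | TKMeet t1 t2 => a_kmeet A (evalA r t1) (evalA r t2)
  | TKJoin t1 t2 => a_kjoin A (evalA r t1) (evalA r t2)
  end.

Lemma hom_evalA (k : 'I_n.+1) (x : acar A -> Mcar k) : is_hom A (Malg k) x ->
  forall r t, emb (x (evalA r t)) = evalM (k == 0 :> nat) (fun i => emb (x (r i))) t.
Proof.
case=> x_km [x_kj [_ [_ [x_neg [x_top [x_f [x_t x_bot]]]]]]] r.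
elim=> //= [||||t IH|t1 IH1 t2 IH2|t1 IH1 t2 IH2].
- by rewrite x_top emb_top.
- by rewrite x_bot emb_bot.
- by rewrite x_f emb_f lt0n; case: eqP.
- by rewrite x_t emb_t lt0n; case: eqP.
- by rewrite x_neg emb_neg IH.
- by rewrite x_km emb_kmeet IH1 IH2.
- by rewrite x_kj emb_kjoin IH1 IH2.
Qed.

Lemma hom_proj I (c : I -> 'I_n.+1) (e : acar A -> acar (Mprod c)) i :
  is_hom A (Mprod c) e -> is_hom A (Malg (c i)) (fun a => e a i).
Proof.
case=> e_km [e_kj [e_m [e_j [e_neg [e_top [e_f [e_t e_bot]]]]]]].
by do ![split] => *; rewrite ?e_km ?e_kj ?e_m ?e_j ?e_neg ?e_top ?e_f ?e_t ?e_bot.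
Qed.

Lemma hom_closed (k : 'I_n.+1) : prod_open (fun x : acar A -> Mcar k => ~ is_hom A (Malg k) x).
Proof.
rewrite /is_hom; repeat first [apply: prod_closed_and | apply: prod_closed_forall => ? |
  apply: prod_closed_eq2 | apply: prod_closed_eq1 | apply: prod_closed_eq0].
Qed.

Definition hom_gM (k : 'I_n.+1) (x : acar A -> Mcar k) (x_hom : is_hom A (Malg k) x) :
  is_hom A (Malg ord0) (fun a => gM (x a)) := hom_comp x_hom (gM_hom k).

(* [D_of A] is convertible to [DA], so the results on closed substructures of powers apply. *)
Local Notation DA := (SubPow hom_gM).

Definition chi (u : XU DA + XU DA) (a : acar A) : bool :=
  pfilter (pside u) (srt (pbase u) == 0) (val6 (pbase u) a).

Lemma chi_evalA u r t : chi u (evalA r t) =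
  pfilter (pside u) (srt (pbase u) == 0) (evalM (srt (pbase u) == 0) (val6 (pbase u) \o r) t).
Proof. by rewrite /chi /val6 (hom_evalA (proj2_sig (projT2 (pbase u)))). Qed.

Lemma chi_bl u : is_bl_hom (chi u).
Proof.
have [_ [_ [x_meet [x_join _]]]] := proj2_sig (projT2 (pbase u)).
split; [|split; [|split]].
- by move=> a b; rewrite /chi /val6 x_meet emb_tmeet pfilter_tmeet.
- by move=> a b; rewrite /chi /val6 x_join emb_tjoin pfilter_tjoin.
- by rewrite -[a_f A ord0]/(evalA (fun _ => a_top A) TF0) chi_evalA /=; case: pside; case: eqP.
- by rewrite -[a_t A ord0]/(evalA (fun _ => a_top A) TT0) chi_evalA /=; case: pside; case: eqP.
Qed.

Definition Chi (u : os_car (P_of DA)) : os_car (H_flat A) := exist _ (chi u) (chi_bl u).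

Lemma val6_f (x : XU DA) i : val6 x (a_f A i) = emb (Mf (srt x) i).
Proof. by have [_ [_ [_ [_ [_ [_ [x_f _]]]]]]] := proj2_sig (projT2 x); rewrite /val6 x_f. Qed.

Lemma val6_t (x : XU DA) i : val6 x (a_t A i) = emb (Mt (srt x) i).
Proof. by have [_ [_ [_ [_ [_ [_ [_ [x_t _]]]]]]]] := proj2_sig (projT2 x); rewrite /val6 x_t. Qed.

Lemma srt_le (x : XU DA) : srt x <= n.
Proof. by rewrite -ltnS; exact: ltn_ord. Qed.

(* ⊤ and ⊥ fix the sides, t_(j-1) and f_j compare the sorts j and k. *)
Lemma sort_le_of_chi u v : (forall a, chi u a -> chi v a) ->
  sort_le (pside u) (srt (pbase u)) (pside v) (srt (pbase v)).
Proof.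
move=> uv; have ju := srt_le (pbase u); have kv := srt_le (pbase v).
have at_term t : chi u (evalA (fun _ => a_top A) t) -> chi v (evalA (fun _ => a_top A) t) := uv _.
apply: sort_le_of_pfilter.
- by apply/implyP; move: (at_term TTop); rewrite !chi_evalA.
- by apply/implyP; move: (at_term TBot); rewrite !chi_evalA.
- case/and4P=> b1 b2 j0 k0; move: (uv (a_t A (inord (srt (pbase u)).-1))).
  rewrite /chi !val6_t !emb_t !inordK; try lia.
  rewrite b1 b2 (negbTE j0) (negbTE k0) (_ : _.-1 < _); last lia.
  by case: ifP => [lt _|_ /(_ isT)] //; lia.
- case/and4P=> /negbTE b1 /negbTE b2 j0 k0; move: (uv (a_f A (inord (srt (pbase u))))).
  rewrite /chi !val6_f !emb_f !inordK; try lia.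
  rewrite b1 b2 (negbTE j0) (negbTE k0) ltnn.
  by case: ifP => [_ /(_ isT)|ge _] //; lia.
Qed.

Lemma chi_le u v : P_le u v <-> forall a, chi u a -> chi v a.
Proof.
split=> [/P_le_tests [_ uv] a|uv]; first exact: (tests_le_var (uv (fun _ => a) Logic.I)).
apply/P_le_tests; split=> [|rho _]; first exact: sort_le_of_chi.
by apply: allT => t; apply/implyP; rewrite -!chi_evalA; exact: uv.
Qed.

Lemma chi_inj u v : chi u = chi v -> u = v.
Proof. by move=> uv; apply: P_le_antisym; apply/chi_le; rewrite uv. Qed.

Lemma chi_coord_open (P : bool -> Prop) a : os_open (P_of DA) (fun u => P (chi u a)).
Proof.
apply: (@P_open_local _ _ _ _ [:: a]) => b k z z' za.
by case: b; rewrite /chi /val6 /= za //; left.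
Qed.

Lemma Chi_cont : os_continuous Chi.
Proof.
move=> V [U [U_open VU]].
have piece b k : sub_open (fun x => is_hom A (Malg k) x) (@prod_open _ _)
    (fun z => V (Chi (pinj b (existT _ k z)))).
  exists (fun f => U (fun a => pfilter b (k == 0 :> nat) (emb (f a)))); split.
  - by move=> f /U_open [l Hl]; exists l => g gf; apply: Hl => a Ha; rewrite gf.
  - by move=> z; rewrite VU; case: b.
by split=> k; [exact: piece true k | exact: piece false k].
Qed.

Lemma chi_separates : in_Vn A -> forall a b, a_meet A a b <> a ->
  exists u, chi u a && ~~ chi u b.
Proof.
case=> I [c [e [e_hom e_inj]]] a b ab.
have [i ei] : exists i, e (a_meet A a b) i <> e a i.
  apply: NNPP => same; apply: ab; apply: e_inj; apply: functional_extensionality_dep => i.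
  by apply: NNPP => ne; apply: same; exists i.
pose x : XU DA := existT _ (c i) (exist _ _ (hom_proj i e_hom)).
have meet_ne : mk_meet tle6 F6 (val6 x a) (val6 x b) <> val6 x a.
  move=> E; apply: ei; apply: emb_inj; have [_ [_ [e_meet _]]] := e_hom.
  by rewrite e_meet /= emb_tmeet; exact: E.
case/or4P: (pfilter_separates (val6_in_sort x a) (val6_in_sort x b) meet_ne) => sep.
- by exists (inl x).
- by exists (inr x).
- by exists (inl (XU_g x)); rewrite /chi /= XU_g_srt XU_g_val6.
- by exists (inr (XU_g x)); rewrite /chi /= XU_g_srt XU_g_val6.
Qed.

Lemma bl_meet_list (g : acar A -> bool) l : is_bl_hom g ->
  g (foldr (a_meet A) (a_t A ord0) l) <-> forall a, List.In a l -> g a.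
Proof.
case=> g_meet [_ [_ g_t]]; elim: l => [|a l IH] /=; first by rewrite g_t.
rewrite g_meet; split=> [/andP[ga /IH gl] b [<-|/gl]|gl] //.
by rewrite gl /=; [apply/IH => b Hb; apply: gl; right|left].
Qed.

Lemma bl_join_list (g : acar A -> bool) l : is_bl_hom g ->
  g (foldr (a_join A) (a_f A ord0) l) <-> exists2 a, List.In a l & g a.
Proof.
case=> _ [g_join [g_f _]]; elim: l => [|a l IH] /=; first by rewrite g_f; split=> // -[].
rewrite g_join; split=> [/orP[ga|/IH [b Hb gb]]|[b [<-|Hb] gb]]; first by exists a; [left|].
- by exists b; [right|].
- by rewrite gb.
- by apply/orP; right; apply/IH; exists b.
Qed.

Hypothesis A_Vn : in_Vn A.

(* If h is not of the form chi u, compactness gives a finite set of elements of A on which each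
   chi u disagrees with h; the meet of those in h and the join of those outside h would be
   separated by some chi u, which then agrees with h on all of them. *)
Lemma Chi_surj (h : os_car (H_flat A)) : exists u, Chi u = h.
Proof.
apply: NNPP => no_preimage.
have chi_ne u : True -> chi u <> proj1_sig h.
  move=> _ uh; apply: no_preimage; exists u.
  by apply: eq_sig_hprop => [x p q|]; [exact: proof_irrelevance|].
have [la Hla] := compact_separation (SubPow_P_compact (HY := hom_gM) hom_closed)
  (fun a => chi_coord_open (fun b => b <> proj1_sig h a) a) chi_ne.
have h_bl := proj2_sig h; set g := proj1_sig h in h_bl Hla *.
set am := foldr (a_meet A) (a_t A ord0) (List.filter g la).
set aj := foldr (a_join A) (a_f A ord0) (List.filter (fun a => ~~ g a) la).
have g_am : g am by apply/bl_meet_list => // a /List.filter_In [].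
have g_aj : ~~ g aj.
  by apply/negP => /(bl_join_list _ h_bl) [a /List.filter_In [_ /negP]].
have [u /andP [u_am u_aj]] : exists u, chi u am && ~~ chi u aj.
  apply: chi_separates => // E; move: g_am; rewrite -E.
  by case: h_bl => -> _; rewrite (negbTE g_aj) andbF.
have [a [Ha]] := Hla u Logic.I; apply.
case ga: (g a).
- by move/bl_meet_list: u_am => /(_ (chi_bl u)); apply; apply/List.filter_In.
- apply/negbTE/negP => ua; move/negP: u_aj; apply; apply/bl_join_list; first exact: chi_bl.
  by exists a => //; apply/List.filter_In; rewrite ga.
Qed.

Definition Chi_inv (h : os_car (H_flat A)) : os_car (P_of DA) :=
  proj1_sig (constructive_indefinite_description _ (Chi_surj h)).

Lemma Chi_invK : cancel Chi_inv Chi.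
Proof. by move=> h; rewrite /Chi_inv; case: constructive_indefinite_description. Qed.

Lemma chi_Chi_inv h : chi (Chi_inv h) = proj1_sig h.
Proof. by rewrite -[chi _]/(proj1_sig (Chi _)) Chi_invK. Qed.

Lemma ChiK : cancel Chi Chi_inv.
Proof. by move=> u; apply: chi_inj; rewrite chi_Chi_inv. Qed.

Lemma Chi_inv_cont : os_continuous Chi_inv.
Proof.
move=> V V_open.
have V_compl : compact_in (os_open (P_of DA)) (fun u => ~ V u).
  apply: (@compact_ext _ _ (fun u => True /\ ~ V u)) => [u|]; first by split=> [[]|].
  apply: compact_closed (SubPow_P_compact (HY := hom_gM) hom_closed) _.
  suff -> : (fun u => ~ ~ V u) = V by [].
  by apply: pred_ext => u; split=> [/NNPP|Vu /(_ Vu)].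
exists (fun f => exists h0, V (Chi_inv h0) /\ exists la : list (acar A),
  (forall u, ~ V u -> exists a, List.In a la /\ chi u a <> proj1_sig h0 a) /\
  forall a, List.In a la -> f a = proj1_sig h0 a).
split=> [f [h0 [Vh0 [la [sep_la f_la]]]]|h].
  by exists la => g g_la; exists h0; split=> //; exists la; split=> // a Ha; rewrite g_la ?f_la.
split=> [Vh|[h0 [Vh0 [la [sep_la h_la]]]]].
- have chi_ne u : ~ V u -> chi u <> proj1_sig h.
    by move=> nVu uh; apply: nVu; rewrite (@chi_inj u (Chi_inv h)) ?chi_Chi_inv.
  have [la Hla] := compact_separation V_compl
    (fun a => chi_coord_open (fun b => b <> proj1_sig h a) a) chi_ne.
  by exists h; split=> //; exists la.
- apply: NNPP => nV; have [a [Ha]] := sep_la _ nV; apply.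
  by rewrite chi_Chi_inv h_la.
Qed.

Lemma H_flat_iso : os_iso (H_flat A) (P_of DA).
Proof.
exists Chi_inv, Chi; split; first exact: Chi_invK.
split; first exact: ChiK.
split; first exact: Chi_inv_cont.
split; first exact: Chi_cont.
move=> h h'; rewrite /= chi_le !chi_Chi_inv.
by split=> H a; apply/implyP; exact: H.
Qed.

End Dual.

Theorem theorem6p2 (n : nat) (Hn : (1 <= n)%N) :
  (* P(X) is a Priestley space for every object X of X_n *)
  (forall X : MStruct n, in_Xn X -> Priestley (P_of X)) /\
  (* P(phi) is continuous and order-preserving for every morphism of X_n *)
  (forall (X Y : MStruct n) (phi : forall k, ms_sort X k -> ms_sort Y k),
      in_Xn X -> in_Xn Y -> is_morph phi ->
      os_continuous (P_map phi) /\ os_monotone (P_map phi)) /\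
  (* functoriality *)
  (forall (X : MStruct n) (u : os_car (P_of X)),
      P_map (fun k (x : ms_sort X k) => x) u = u) /\
  (forall (X Y Z : MStruct n) (phi : forall k, ms_sort X k -> ms_sort Y k)
          (psi : forall k, ms_sort Y k -> ms_sort Z k) (u : os_car (P_of X)),
      P_map (fun k x => psi k (phi k x)) u = P_map psi (P_map phi u)) /\
  (* H(A^flat) ≅ P(D(A)) *)
  (forall A : Alg n, in_Vn A -> os_iso (H_flat A) (P_of (D_of A))).
Proof.
split; first exact: Xn_priestley.
split; first by move=> X Y phi _ _ phi_morph; split; [exact: P_map_cont | exact: P_map_mono].
split; first exact: P_map_id.
split; first exact: P_map_comp.
by move=> A A_Vn; exact: H_flat_iso.
Qed.
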